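(* Let $\mathcal{C}$ be a 3XOR instance with $\mathrm{val}(\mathcal{C})\ge 1-\epsilon$. Then $\mathrm{GI}(G_{\mathcal{C}},G_{\mathcal{C}^0})\ge 1-2\epsilon/3$.
   Context: A 3XOR instance $\mathcal{C}=(C_1,\dots,C_m)$ over a variable set $\mathcal{X}$ with $|\mathcal{X}|=n$ consists of equations $C_i: x_{j_1}+x_{j_2}+x_{j_3}=b$ over $\mathbb{Z}_2$ on three distinct variables. $\mathrm{val}(\mathcal{C})$ is the maximum over assignments $\tau:\mathcal{X}\to\mathbb{Z}_2$ of the fraction of satisfied equations. The homogeneous version $C^0$ of $C$ is the same equation with right-hand side $0$, and $\mathcal{C}^0=\{C^0:C\in\mathcal{C}\}$. Graph $G_{\mathcal{C}}$: for each variable $x$ there are two ''variable vertices'' $x\mapsto 0$, $x\mapsto 1$ joined by an edge. For each equation $C$ on $x_1,x_2,x_3$ there are 4 ''constraint vertices'' $\alpha_C$, one for each assignment $\alpha=(x_1\mapsto a_1,x_2\mapsto a_2,x_3\mapsto a_3)$ satisfying $C$ (distinct constraints get distinct constraint vertices); these 4 vertices form a clique, and each $\alpha_C$ is adjacent to the three variable vertices $x_i\mapsto a_i$ consistent with it. Variable vertices are shared among all constraints. Thus $G_{\mathcal{C}}$ has $4m+2n$ vertices and $18m+n$ edges. For graphs $G,H$ on equally many vertices, $\mathrm{GI}(G,H)=\max_{\pi}\frac{|\{e\in E(G):\pi(e)\in E(H)\}|}{\max\{|E(G)|,|E(H)|\}}$ over bijections $\pi:V(G)\to V(H)$. *)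

From mathcomp Require Import all_boot all_order all_algebra.
Set Implicit Arguments. Unset Strict Implicit. Unset Printing Implicit Defensive.
Import Order.TTheory GRing.Theory Num.Theory.

(* An equation x_{j1} + x_{j2} + x_{j3} = b over Z_2: ((j1, j2, j3), b). *)
Definition xeqn (n : nat) := ('I_n * 'I_n * 'I_n * bool)%type.
Definition ev1 n (e : xeqn n) : 'I_n := e.1.1.1.
Definition ev2 n (e : xeqn n) : 'I_n := e.1.1.2.
Definition ev3 n (e : xeqn n) : 'I_n := e.1.2.
Definition erhs n (e : xeqn n) : bool := e.2.

Definition wf3xor n m (C : 'I_m -> xeqn n) : Prop :=
  forall i, [/\ ev1 (C i) != ev2 (C i), ev1 (C i) != ev3 (C i) & ev2 (C i) != ev3 (C i)].

Definition sat n (e : xeqn n) (tau : {ffun 'I_n -> bool}) : bool :=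
  (tau (ev1 e) (+) tau (ev2 e) (+) tau (ev3 e)) == erhs e.

Definition xorval (R : numFieldType) n m (C : 'I_m -> xeqn n) : R :=
  ((\max_(tau : {ffun 'I_n -> bool}) #|[set i | sat (C i) tau]|)%:R / m%:R)%R.

Definition homog n m (C : 'I_m -> xeqn n) : 'I_m -> xeqn n :=
  fun i => ((C i).1, false).

(* Ambient vertex type: variable vertices (x |-> a), and candidate
   constraint vertices (i, (a1,a2,a3)) = assignment (x_{j1}|->a1, x_{j2}|->a2, x_{j3}|->a3)
   for constraint C_i. *)
Definition vtx n m := (('I_n * bool) + ('I_m * (bool * bool * bool)))%type.

Definition csat n (e : xeqn n) (a : bool * bool * bool) : bool :=
  (a.1.1 (+) a.1.2 (+) a.2) == erhs e.

Definition verts n m (C : 'I_m -> xeqn n) : {set vtx n m} :=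
  [set v : vtx n m | match v with inl _ => true | inr (i, a) => csat (C i) a end].

Definition incident n (e : xeqn n) (a : bool * bool * bool) (x : 'I_n) (c : bool) : bool :=
  [|| (x == ev1 e) && (c == a.1.1), (x == ev2 e) && (c == a.1.2)
    | (x == ev3 e) && (c == a.2)].

Definition adj n m (C : 'I_m -> xeqn n) (u v : vtx n m) : bool :=
  match u, v with
  | inl (x, a), inl (y, c) => (x == y) && (a != c)
  | inr (i, a), inr (j, c) => (i == j) && (a != c)
  | inr (i, a), inl (x, c) => incident (C i) a x c
  | inl (x, c), inr (i, a) => incident (C i) a x c
  end.

Definition edges n m (C : 'I_m -> xeqn n) : {set {set vtx n m}} :=
  [set [set u; v] | u in verts C, v in verts C & adj C u v].

Definition is_bij (T : finType) (VG VH : {set T}) (pi : {ffun T -> T}) : bool :=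
  dinjectiveb pi VG && (pi @: VG == VH).

Definition GI (R : numFieldType) (T : finType) (VG VH : {set T})
    (EG EH : {set {set T}}) : R :=
  ((\max_(pi : {ffun T -> T} | is_bij VG VH pi)
      #|[set e in EG | pi @: e \in EH]|)%:R / (maxn #|EG| #|EH|)%:R)%R.

From mathcomp Require Import all_boot all_order all_algebra.
From mathcomp.algebra_tactics Require Import lra.
Import Order.TTheory GRing.Theory Num.Theory.
Set Implicit Arguments. Unset Strict Implicit. Unset Printing Implicit Defensive.

(* Fix an optimal assignment t and relabel the vertices of G_C by adding t: the
   variable vertex x |-> c goes to x |-> c + t(x), and a constraint vertex for C_i
   is shifted by t on its three variables, with its third coordinate flipped once
   more when t violates C_i.  This maps the satisfying assignments of C_i onto those
   of C_i^0 and keeps every edge, except that for each violated constraint the four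
   edges towards its third variable are broken.  At most eps*m constraints are
   violated while G_C has at least 8m edges, so the lost fraction is at most
   4 eps m / 8m = eps/2 <= 2 eps/3. *)

Lemma GI_ge_bij (R : numFieldType) (T : finType) (VG VH : {set T})
    (EG EH : {set {set T}}) (pi : {ffun T -> T}) (L : nat) :
  is_bij VG VH pi ->
  (maxn #|EG| #|EH| <= #|[set e in EG | pi @: e \in EH]| + L)%N ->
  (0 < maxn #|EG| #|EH|)%N ->
  (1 - L%:R / (maxn #|EG| #|EH|)%:R <= @GI R T VG VH EG EH)%R.
Proof.
move=> bij_pi M_le M_gt0; rewrite /GI.
have M0 : (0 < (maxn #|EG| #|EH|)%:R :> R)%R by rewrite ltr0n.
rewrite ler_pdivlMr // mulrBl mul1r divfK ?gt_eqF // lerBlDr -natrD ler_nat.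
by apply: leq_trans M_le _; rewrite leq_add2r (bigop.leq_bigmax_cond _ bij_pi).
Qed.

Lemma card_preserved_involutive (T : finType) (f : T -> T) (EG EH : {set {set T}}) :
  involutive f ->
  #|[set e in EH | f @: e \in EG]| = #|[set e in EG | f @: e \in EH]|.
Proof.
move=> fK; have imK : involutive (fun e : {set T} => f @: e).
  by move=> e; rewrite -imset_comp (eq_imset _ fK) imset_id.
rewrite -(card_imset _ (inv_inj imK)); apply: eq_card => e.
by rewrite -{1}[e]imK mem_imset ?inE ?imK 1?andbC //; apply: inv_inj.
Qed.

Lemma xorval_attained (R : numFieldType) n m (C : 'I_m -> xeqn n) :
  exists t, @xorval R n m C = (#|[set i | sat (C i) t]|%:R / m%:R)%R.
Proof. by rewrite /xorval (bigop.bigmax_eq_arg [ffun=> false]) //; eexists. Qed.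

Lemma card_xor3_eq (b : bool) :
  #|[set a : bool * bool * bool | a.1.1 (+) a.1.2 (+) a.2 == b]| = 4.
Proof.
have -> : [set a : bool * bool * bool | a.1.1 (+) a.1.2 (+) a.2 == b] =
    [set (p.1, p.2, p.1 (+) p.2 (+) b) | p in [set: bool * bool]].
  apply/setP => -[[a1 a2] a3]; rewrite inE; apply/idP/imsetP.
    by move=> /eqP <-; exists (a1, a2); rewrite ?inE //=; case: a1 a2 a3 => [] [] [].
  by case=> -[p1 p2] _ [-> -> ->] /=; case: p1 p2 b => [] [] [].
rewrite card_imset; first by rewrite cardsT card_prod card_bool.
by move=> [p1 p2] [q1 q2] [-> ->].
Qed.

Section ConstraintVertices.
Variables (n m : nat).

Definition cverts (D : 'I_m -> xeqn n) (Q : pred 'I_m) : {set 'I_m * (bool * bool * bool)} :=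
  [set p | Q p.1 && csat (D p.1) p.2].

Lemma card_cverts D Q : #|cverts D Q| = 4 * #|[set i | Q i]|.
Proof.
transitivity (\sum_(i | Q i) \sum_(a | csat (D i) a) 1)%N.
  by rewrite pair_big_dep sum1dep_card.
rewrite (eq_bigr (fun=> 4)) => [|i _]; last by rewrite sum1dep_card card_xor3_eq.
by rewrite sum_nat_const cardsE mulnC.
Qed.

Lemma set2_inr_inl_inj (p q : 'I_m * (bool * bool * bool)) (x y : 'I_n * bool) :
  [set inr p; inl x] = [set inr q; inl y] :> {set vtx n m} -> p = q /\ x = y.
Proof.
move=> E.
have /set2P[[->]|//] : inr p \in ([set inr q; inl y] : {set vtx n m}) by rewrite -E set21.
by have /set2P[//|[->]] : inl x \in ([set inr q; inl y] : {set vtx n m}) by rewrite -E set22.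
Qed.

Lemma card_edges_ge (D : 'I_m -> xeqn n) : wf3xor D -> (8 * m <= #|edges D|)%N.
Proof.
move=> wfD.
pose leg (p : 'I_m * (bool * bool * bool)) (b : bool) : 'I_n * bool :=
  if b then (ev1 (D p.1), p.2.1.1) else (ev2 (D p.1), p.2.1.2).
pose edge (q : 'I_m * (bool * bool * bool) * bool) : {set vtx n m} :=
  [set inr q.1; inl (leg q.1 q.2)].
have edge_inj : injective edge.
  move=> [p b] [q c] /set2_inr_inl_inj [/= <-]; case: p => i a.
  have [n12 _ _] := wfD i.
  by case: b c => [] [] //= [E _]; rewrite E eqxx in n12.
have sub : edge @: setX (cverts D predT) setT \subset edges D.
  apply/subsetP => e /imsetP[[[i a] b]]; rewrite !inE andbT /= => ha ->.
  apply/imset2P; exists (inr (i, a)) (inl (leg (i, a) b)); rewrite ?inE //.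
  by case: b; rewrite /= /incident !eqxx ?orbT.
apply: leq_trans (subset_leq_card sub).
rewrite card_imset // cardsX cardsT card_bool card_cverts.
by rewrite cardsE card_ord mulnAC.
Qed.

End ConstraintVertices.

Section Shift.
Variables (n m : nat) (C : 'I_m -> xeqn n) (t : {ffun 'I_n -> bool}).

Definition unsat (i : 'I_m) : bool := ~~ sat (C i) t.

Definition shift_asg (i : 'I_m) (a : bool * bool * bool) : bool * bool * bool :=
  (a.1.1 (+) t (ev1 (C i)), a.1.2 (+) t (ev2 (C i)), a.2 (+) t (ev3 (C i)) (+) unsat i).

Definition shift : {ffun vtx n m -> vtx n m} :=
  [ffun v => match v with
             | inl (x, c) => inl (x, c (+) t x)
             | inr (i, a) => inr (i, shift_asg i a)
             end].

Definition third_edge (p : 'I_m * (bool * bool * bool)) : {set vtx n m} :=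
  [set inr p; inl (ev3 (C p.1), p.2.2)].

Lemma shift_asgK i : involutive (shift_asg i).
Proof.
move=> [[a1 a2] a3]; rewrite /shift_asg /=.
by case: a1 a2 a3 (t (ev1 (C i))) (t (ev2 (C i))) (t (ev3 (C i))) (unsat i)
  => [] [] [] [] [] [] [].
Qed.

Lemma shiftK : involutive shift.
Proof.
by move=> [[x c]|[i a]]; rewrite !ffunE ?shift_asgK //= -addbA addbb addbF.
Qed.

Lemma shift_verts v : (shift v \in verts (homog C)) = (v \in verts C).
Proof.
case: v => [[x c]|[i [[a1 a2] a3]]]; rewrite ffunE !inE //= /csat /shift_asg /unsat /sat /=.
by case: a1 a2 a3 (t (ev1 (C i))) (t (ev2 (C i))) (t (ev3 (C i))) (erhs (C i))
  => [] [] [] [] [] [] [].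
Qed.

Lemma shift_bij : is_bij (verts C) (verts (homog C)) shift.
Proof.
have shift_inj : injective shift := inv_inj shiftK.
apply/andP; split; first by apply/dinjectiveP => u v _ _ /shift_inj.
apply/eqP/setP => w; rewrite -[w]shiftK mem_imset //.
by rewrite shift_verts.
Qed.

Lemma incident_shift i a x c :
  incident (C i) a x c -> ~~ incident (C i) (shift_asg i a) x (c (+) t x) ->
  [/\ unsat i, x = ev3 (C i) & c = a.2].
Proof.
case: a => [[a1 a2] a3]; rewrite /incident /shift_asg /=.
case/or3P => /andP[/eqP -> /eqP ->]; rewrite !eqxx /= ?orbT //.
by case: (unsat i); rewrite ?addbF ?eqxx ?orbT.
Qed.

Lemma adj_shift u v :
  adj C u v -> ~~ adj C (shift u) (shift v) ->
  exists2 p, unsat p.1 & [set u; v] = third_edge p.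
Proof.
case: u => [[x c]|[i a]]; case: v => [[y d]|[j b]]; rewrite !ffunE /=.
- by move=> /andP[/eqP <- cd]; rewrite eqxx; case: c d (t x) cd => [] [] [].
- move=> /incident_shift H /H[ui -> ->].
  by exists (j, b) => //; rewrite setUC.
- by move=> /incident_shift H /H[ui -> ->]; exists (i, a).
- by move=> /andP[/eqP <- ab]; rewrite eqxx (inj_eq (inv_inj (shift_asgK i))) ab.
Qed.

Lemma card_edges_shift (D1 D2 : 'I_m -> xeqn n) :
  adj D1 =2 adj C -> adj D2 =2 adj C ->
  {in verts D1, forall v, shift v \in verts D2} ->
  (#|edges D1| <= #|[set e in edges D1 | shift @: e \in edges D2]|
                  + 4 * #|[set i | unsat i]|)%N.
Proof.
move=> adj1 adj2 shiftV.
have lost e : e \in edges D1 -> shift @: e \notin edges D2 ->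
    e \in third_edge @: cverts D1 unsat.
  case/imset2P=> u v uV; rewrite inE => /andP[vV huv] -> kept.
  have huv' : ~~ adj C (shift u) (shift v).
    apply: contra kept; rewrite -adj2 => h; rewrite imsetU1 imset_set1.
    by apply/imset2P; exists (shift u) (shift v); rewrite ?(shiftV _ uV) // in_set (shiftV _ vV) h.
  rewrite adj1 in huv; have [[i a] ui Euv] := adj_shift huv huv'.
  apply/imsetP; exists (i, a) => //; rewrite inE ui /=.
  have : inr (i, a) \in [set u; v] by rewrite Euv set21.
  by rewrite in_set2 => /orP[] /eqP Ew; [move: uV | move: vV]; rewrite -Ew inE.
have sub : edges D1 \subset
    [set e in edges D1 | shift @: e \in edges D2] :|: third_edge @: cverts D1 unsat.
  apply/subsetP => e eE; rewrite !inE eE /=.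
  by case: (boolP (_ \in edges D2)) => // /(lost e eE) ->; rewrite orbT.
apply: leq_trans (subset_leq_card sub) _; apply: leq_trans (leq_card_setU _ _) _.
by rewrite leq_add2l -(card_cverts D1) leq_imset_card.
Qed.

Lemma card_sat_unsat : (#|[set i | sat (C i) t]| + #|[set i | unsat i]|)%N = m.
Proof.
have -> : [set i | unsat i] = ~: [set i | sat (C i) t] by apply/setP => i; rewrite !inE.
by rewrite cardsC card_ord.
Qed.

Lemma maxn_card_edges_shift :
  (maxn #|edges C| #|edges (homog C)|
     <= #|[set e in edges C | shift @: e \in edges (homog C)]| + 4 * #|[set i | unsat i]|)%N.
Proof.
rewrite geq_max; apply/andP; split.
  by apply: card_edges_shift => // v; rewrite shift_verts.
rewrite -(card_preserved_involutive _ _ shiftK).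
by apply: card_edges_shift => // v; rewrite -shift_verts shiftK.
Qed.

End Shift.

Local Open Scope ring_scope.

Theorem lemma4p1 (R : realFieldType) (n m : nat) (C : 'I_m -> xeqn n) (eps : R) :
  (0 < m)%N -> wf3xor C ->
  1 - eps <= @xorval R n m C ->
  1 - 2 * eps / 3 <= @GI R _ (verts C) (verts (homog C)) (edges C) (edges (homog C)).
Proof.
move=> m_gt0 wfC val_ge.
have [t val_t] := xorval_attained R C; rewrite val_t in val_ge.
set U := #|[set i | unsat C t i]|.
have m0 : 0 < m%:R :> R by rewrite ltr0n.
have U_le : U%:R <= eps * m%:R.
  have mR : m%:R = #|[set i | sat (C i) t]|%:R + U%:R :> R.
    by rewrite -natrD card_sat_unsat.
  by move: val_ge; rewrite ler_pdivlMr // mR; lra.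
have U_ge0 : 0 <= U%:R :> R := ler0n _ _.
have eps_ge0 : 0 <= eps by rewrite -(pmulr_lge0 _ m0) (le_trans U_ge0 U_le).
pose M := maxn #|edges C| #|edges (homog C)|.
have M_ge : (8 * m <= M)%N := leq_trans (card_edges_ge wfC) (leq_maxl _ _).
have M_gt0 : (0 < M)%N by rewrite (leq_trans _ M_ge) // muln_gt0.
apply: le_trans (GI_ge_bij R (shift_bij C t) (maxn_card_edges_shift C t) M_gt0).
rewrite lerD2l lerN2 ler_pdivrMr ?ltr0n // natrM.
have M8 : 8 * m%:R <= M%:R :> R by rewrite -(natrM R 8) ler_nat.
have := ler_wpM2l eps_ge0 M8; lra.
Qed.
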